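(* Let $\rho(x)=1/\sqrt{1-(x/2)^2}$ for $x\in(-2,2)$, and let $F\in C_c(\mathbb{R})$ with $F\ge0$ and $F(x)\le F(y)$ whenever $|x|>|y|$. Then there exist constants $C$ and $n_0$ such that for all $n\ge n_0$, $$\sup_{|\mu|<2}\int_{-2}^{2}F\bigl(n\rho(x)(x-\mu)\bigr)\rho(x)\,dx\le\frac Cn.$$ *)

From HB Require Import structures.
From mathcomp Require Import all_boot all_order all_algebra.
From mathcomp Require Import all_classical all_reals all_analysis.
Set Implicit Arguments. Unset Strict Implicit. Unset Printing Implicit Defensive.
Import Order.TTheory GRing.Theory Num.Theory.
Import numFieldNormedType.Exports.
Local Open Scope classical_set_scope.
Local Open Scope ring_scope.

Definition rho (R : realType) (x : R) : R := (Num.sqrt (1 - (x / 2) ^+ 2))^-1.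

Definition compact_support (R : realType) (F : R -> R) : Prop :=
  compact (closure [set x | F x != 0]).

From HB Require Import structures.
From mathcomp Require Import all_boot all_order all_algebra.
From mathcomp Require Import all_classical all_reals all_analysis.
From mathcomp Require Import measurable_realfun ring lra.
Set Implicit Arguments.
Unset Strict Implicit.
Unset Printing Implicit Defensive.

Import Order.TTheory GRing.Theory Num.Theory.
Import numFieldNormedType.Exports.
Local Open Scope classical_set_scope.
Local Open Scope ring_scope.

(* Let [-K, K] contain the support of F. The integrand vanishes unless
   |x - mu| <= (K / n) sqrt (1 - (x / 2)^2). Writing x = 2 sin t and mu = 2 sin s,
   the inequality cos t |t - s| <= 4 |sin t - sin s| (sum-to-product formulas and
   sin h >= h / 2 on [0, pi/2]) turns this into |t - s| <= 2 K / n; the same constraint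
   keeps x away from -2 and 2, so the integrand is supported in a compact [p, q] of
   (-2, 2) on which asin (x / 2) varies by at most 4 K / n. Since 2 asin (x / 2) is a
   primitive of rho, the integral is at most F 0 * 8 K / n. *)

Section trigonometry.
Variable R : realType.
Implicit Types (t f y u v : R).

Lemma mul_cos_le_sin y : 0 <= y <= pi -> y * cos y <= sin y.
Proof.
move=> /andP[y0 ypi]; have [->|yneq0] := eqVneq y 0; first by rewrite mul0r sin0.
have {}y0 : 0 < y by rewrite lt_neqAle eq_sym yneq0.
have [c] : exists2 c, c \in `]0, y[ & sin y - sin 0 = cos c * (y - 0).
  apply: MVT => //; apply: continuous_subspaceT => x; exact: continuous_sin.
rewrite in_itv /= sin0 !subr0 => /andP[c0 cy] ->.
have cos_le : cos y <= cos c.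
  have [cI yI] : c \in `[0, pi] /\ y \in `[0, pi].
    by rewrite !in_itv /=; split; apply/andP; split; lra.
  by rewrite leNgt ltr_cos // -leNgt ltW.
by rewrite [cos c * y]mulrC ler_pM2l.
Qed.

Lemma half_le_sin y : 0 <= y <= pi / 2 -> y / 2 <= sin y.
Proof.
move=> /andP[y0 ypi]; have pi0 := pi_gt0 R.
have ey : y = (y / 2) *+ 2 by rewrite -mulr_natr mulfVK.
have cy : 0 <= cos y by apply: cos_ge0_pihalf; apply/andP; split; lra.
have cz : 0 <= cos (y / 2) by apply: cos_ge0_pihalf; apply/andP; split; lra.
have sz : y / 2 * cos (y / 2) <= sin (y / 2).
  by apply: mul_cos_le_sin; apply/andP; split; lra.
have sinE : sin y = cos (y / 2) * sin (y / 2) * 2 by rewrite {1}ey sin_mulr2n -mulr_natr.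
have cosE : cos y = cos (y / 2) ^+ 2 * 2 - 1 by rewrite {1}ey cos_mulr2n -mulr_natr.
rewrite sinE; rewrite cosE in cy.
have : 0 <= cos (y / 2) * (sin (y / 2) - y / 2 * cos (y / 2)) by rewrite mulr_ge0 ?subr_ge0.
have : 0 <= y / 2 * (cos (y / 2) ^+ 2 * 2 - 1) by rewrite mulr_ge0 ?divr_ge0.
rewrite expr2 in cy *; nra.
Qed.

Lemma half_norm_le_norm_sin y : - (pi / 2) <= y <= pi / 2 -> `|y| / 2 <= `|sin y|.
Proof.
wlog y0 : y / 0 <= y => [wlog_y0 yI|/andP[_ ypi]].
  have [y0|/ltW y0] := leP 0 y; first exact: wlog_y0.
  rewrite -normrN -[`|sin y|]normrN -sinN; apply: wlog_y0; first by rewrite oppr_ge0.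
  by move: yI => /andP[? ?]; apply/andP; split; lra.
have : y / 2 <= sin y by apply: half_le_sin; rewrite y0.
by move=> h; rewrite !ger0_norm //; lra.
Qed.

Lemma cos_mul_dist_le_dist_sin t f :
  - (pi / 2) <= t <= pi / 2 -> - (pi / 2) <= f <= pi / 2 ->
  cos t * `|t - f| <= 4 * `|sin t - sin f|.
Proof.
move=> /andP[t1 t2] /andP[f1 f2].
set m := (t + f) / 2; set h := (f - t) / 2.
have [-> ->] : t = m - h /\ f = m + h by split; rewrite /m /h; field.
have cm : 0 <= cos m by apply: cos_ge0_pihalf; apply/andP; rewrite /m; lra.
have cf : 0 <= cos (m + h) by apply: cos_ge0_pihalf; apply/andP; rewrite /m /h; lra.
have cos_le : cos (m - h) <= 2 * cos m.
  have : cos (m - h) + cos (m + h) = 2 * cos m * cos h by rewrite cosB cosD; ring.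
  have := cos_le1 h; nra.
have sin_ge : `|h| / 2 <= `|sin h|.
  by apply: half_norm_le_norm_sin; apply/andP; rewrite /m /h; lra.
clearbody m h.
have -> : m - h - (m + h) = - (2 * h) by ring.
have -> : sin (m - h) - sin (m + h) = - (2 * cos m * sin h) by rewrite sinB sinD; ring.
rewrite !normrN !normrM (ger0_norm cm) ger0_norm //.
have : 0 <= `|h| * (2 * cos m - cos (m - h)) by rewrite mulr_ge0 ?subr_ge0.
have : 0 <= cos m * (`|sin h| - `|h| / 2) by rewrite mulr_ge0 ?subr_ge0.
nra.
Qed.

Lemma ler_sin : {in `[- (pi / 2), pi / 2 : R] &, {mono sin : x y / x <= y}}.
Proof. by move=> x y xI yI; rewrite !leNgt ltr_sin. Qed.

Lemma ler_asin : {in `[-1, 1 : R] &, {mono asin : x y / x <= y}}.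
Proof.
move=> u v; rewrite !in_itv /= => /asin_def[uI uK] /asin_def[vI vK].
by rewrite -ler_sin ?uK ?vK // in_itv.
Qed.

Lemma sqrt_mul_dist_asin_le u v : -1 <= u <= 1 -> -1 <= v <= 1 ->
  Num.sqrt (1 - u ^+ 2) * `|asin u - asin v| <= 4 * `|u - v|.
Proof.
move=> uI vI; rewrite -cos_asin //.
have [[uI' uK] [vI' vK]] := (asin_def uI, asin_def vI).
by have := cos_mul_dist_le_dist_sin uI' vI'; rewrite uK vK.
Qed.

Lemma sqr_sqrt1B u : -1 <= u <= 1 -> Num.sqrt (1 - u ^+ 2) ^+ 2 = 1 - u ^+ 2.
Proof. by move=> /andP[? ?]; rewrite sqr_sqrtr // subr_ge0 expr2; nra. Qed.

Lemma sqrt1B_gt0 u : -1 < u < 1 -> 0 < Num.sqrt (1 - u ^+ 2).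
Proof. by move=> /andP[? ?]; rewrite sqrtr_gt0 subr_gt0 expr2; nra. Qed.

Lemma dist_le_sqrt1B_bounded v b : 0 < b -> -1 < v < 1 ->
  exists2 c, 0 <= c < 1 & forall u, -1 <= u <= 1 ->
    `|u - v| <= b * Num.sqrt (1 - u ^+ 2) -> `|u| <= c.
Proof.
move=> b0 vI; have sv0 := sqrt1B_gt0 vI.
have /andP[v1 v2] := vI; have sv2 : Num.sqrt (1 - v ^+ 2) ^+ 2 = 1 - v ^+ 2.
  by apply: sqr_sqrt1B; apply/andP; split; lra.
set sv := Num.sqrt (1 - v ^+ 2) in sv0 sv2 *.
have sv1 : sv <= 1 by have := sqr_ge0 v; nra.
pose g := Num.min (sv / 2) (3 * sv ^+ 2 / (8 * b)).
have g0 : 0 < g by rewrite lt_min; apply/andP; split; [lra | apply: divr_gt0; nra].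
have g1 : g <= sv / 2 by rewrite ge_min lexx.
exists (Num.sqrt (1 - g ^+ 2)).
  by rewrite sqrtr_ge0 -[ltRHS]sqrtr1 ltr_sqrt // gtrBl exprn_gt0.
move=> u uI hu; have su2 := sqr_sqrt1B uI.
have su0 : 0 <= Num.sqrt (1 - u ^+ 2) := sqrtr_ge0 _.
set su := Num.sqrt (1 - u ^+ 2) in su0 su2 hu *.
have gsu : g <= su.
  (* otherwise 3/4 sv^2 < sv^2 - su^2 = (u - v) (u + v) <= 2 b su *)
  rewrite ge_min; have [//|su_lt] := leP (sv / 2) su; apply/orP; right.
  rewrite ler_pdivrMr ?mulr_gt0 //.
  have : (u - v) * (u + v) <= 2 * `|u - v|.
    have := ler_norm (u - v); have := ler_norm (v - u); rewrite distrC.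
    move: uI => /andP[? ?]; nra.
  nra.
rewrite -sqrtr_sqr ler_sqrt ?subr_ge0; last by nra.
nra.
Qed.

Lemma asin_window c phi d : 0 <= c < 1 -> phi < pi / 2 -> 0 <= d ->
  exists p q, [/\ -1 < p <= q, q < 1, asin q - asin p <= d *+ 2 &
    forall u, `|u| <= c -> `|asin u - phi| <= d -> p <= u <= q].
Proof.
move=> /andP[c0 c1] phi_lt d0; have pi0 := pi_gt0 R.
have [cI NcI] : c \in `[-1, 1] /\ - c \in `[-1, 1].
  by rewrite !in_itv /=; split; apply/andP; split; lra.
have asinNc_gt : - (pi / 2) < asin (- c) by apply: asin_gtNpi2; apply/andP; split; lra.
have asinc_lt : asin c < pi / 2 by apply: asin_ltpi2; apply/andP; split; lra.
have asinNc_le : asin (- c) <= asin c by rewrite ler_asin //; lra.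
pose b1 := Num.max (asin (- c)) (phi - d).
(* the outer max keeps p <= q even when no u satisfies the constraints *)
pose b2 := Num.max b1 (Num.min (asin c) (phi + d)).
have b1_ge : asin (- c) <= b1 /\ phi - d <= b1 by rewrite !le_max !lexx orbT.
have b1_lt : b1 < pi / 2 by rewrite gt_max; apply/andP; split; lra.
have b2_ge : b1 <= b2 by rewrite le_max lexx.
have b2_lt : b2 < pi / 2 by rewrite gt_max b1_lt gt_min asinc_lt.
have b2_le : b2 <= b1 + d *+ 2.
  rewrite ge_max ge_min; apply/andP; split; first by rewrite mulr2n; lra.
  by apply/orP; right; rewrite mulr2n; lra.
have piI x : - (pi / 2) <= x <= pi / 2 -> x \in `[- (pi / 2), pi / 2 : R] by rewrite in_itv.
have [b1I b2I] : b1 \in `[- (pi / 2), pi / 2] /\ b2 \in `[- (pi / 2), pi / 2].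
  by split; apply: piI; apply/andP; split; lra.
exists (sin b1), (sin b2); split.
- by rewrite ler_sin // b2_ge andbT -sin_pihalf -sinN ltr_sin ?piI //; lra.
- by rewrite -sin_pihalf ltr_sin ?piI //; lra.
- by rewrite !sinK //; lra.
move=> u; rewrite !ler_norml => /andP[cu uc] /andP[ud1 ud2].
have uI : u \in `[-1, 1] by rewrite in_itv /=; apply/andP; split; lra.
have /asin_def[/piI asinuI asinuK] : -1 <= u <= 1 by move: uI; rewrite in_itv.
suff /andP[b1u ub2] : b1 <= asin u <= b2 by rewrite -asinuK !ler_sin // b1u.
rewrite -ler_asin // in cu; rewrite -ler_asin // in uc.
apply/andP; split; first by rewrite ge_max; apply/andP; split; lra.
by rewrite le_max le_min uc /=; apply/orP; right; lra.
Qed.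

End trigonometry.

Lemma measurable_fun_itv_continuous (R : realType) (f : R -> R) (p q : R) :
  (forall x, p <= x <= q -> {for x, continuous f}) ->
  measurable_fun `[p, q] (EFin \o f).
Proof.
move=> f_cont; apply/measurable_EFinP.
apply: subspace_continuous_measurable_fun; first exact: measurable_itv.
by apply: continuous_in_subspaceT => x; rewrite inE /= in_itv; exact: f_cont.
Qed.

Lemma integral_vanishing_outside d (T : measurableType d) (R : realType)
    (mu : {measure set T -> \bar R}) (D E : set T) (f : T -> \bar R) :
  E `<=` D -> (forall x, D x -> ~ E x -> f x = 0%E) ->
  (\int[mu]_(x in D) f x = \int[mu]_(x in E) f x)%E.
Proof.
move=> ED f0; rewrite integral_mkcond [RHS]integral_mkcond.
apply: eq_integral => x _; rewrite !patchE.
case: ifPn => [/set_mem xD|xD]; case: ifPn => [/set_mem xE|/negP xE] //.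
- by rewrite f0 //; move=> /mem_set.
- by move: xD; rewrite notin_setE => /(_ (ED x xE)).
Qed.

Section rho.
Variable R : realType.
Implicit Types x p q : R.

Lemma is_derive_asin_half x : -2 < x < 2 ->
  is_derive x 1 (fun z => 2 * asin (z / 2)) (rho x).
Proof.
move=> xI; have hx : -1 < 2^-1 * x < 1 by move: xI => /andP[? ?]; apply/andP; split; lra.
have dh := is_deriveZ 2^-1 (is_derive_id x (1 : R)).
have := is_deriveZ 2 (is_derive1_comp (is_derive1_asin hx) dh).
have -> : 2 \*: (asin \o 2^-1 \*: id) = (fun z : R => 2 * asin (z / 2)).
  by apply/funext => z /=; congr (_ * asin _); exact: mulrC.
move/is_derive_eq; apply.
by rewrite /rho /GRing.scale /= mulr1 mulrCA divff ?mulr1 // (mulrC 2^-1 x).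
Qed.

Lemma rho_gt0 x : -2 < x < 2 -> 0 < rho x.
Proof. by move=> /andP[? ?]; rewrite invr_gt0 sqrt1B_gt0 //; apply/andP; split; lra. Qed.

Lemma rho_ge0 x : 0 <= rho x.
Proof. by rewrite invr_ge0 sqrtr_ge0. Qed.

Lemma continuous_rho x : -2 < x < 2 -> {for x, continuous (@rho R)}.
Proof.
move=> xI; apply: continuousV; first by rewrite gt_eqF // -invr_gt0 rho_gt0.
apply: continuous_comp; last exact: sqrt_continuous.
apply: cvgB; first exact: cvg_cst.
under eq_fun do rewrite expr2.
by apply: cvgM; apply: cvgM; (exact: cvg_id || exact: cvg_cst).
Qed.

Lemma integral_rho p q : -2 < p -> p <= q -> q < 2 ->
  (\int[lebesgue_measure]_(x in `[p, q]) (rho x)%:E =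
    (2 * asin (q / 2) - 2 * asin (p / 2))%:E)%E.
Proof.
move=> p_gt; rewrite le_eqVlt => /orP[/eqP <- _|pq q_lt].
  by rewrite set_itv1 integral_set1 subrr.
have itvI y : p <= y <= q -> -2 < y < 2 by move=> /andP[? ?]; apply/andP; split; lra.
have dF y : p <= y <= q -> is_derive y 1 (fun z => 2 * asin (z / 2)) (rho y).
  by move/itvI; exact: is_derive_asin_half.
have F_cont y : p <= y <= q -> {for y, continuous (fun z : R => 2 * asin (z / 2))}.
  move/dF => dy; apply: differentiable_continuous; apply/derivable1_diffP; exact: ex_derive.
apply: (@continuous_FTC2 _ _ (fun z : R => 2 * asin (z / 2))) => //.
- apply: continuous_in_subspaceT => y; rewrite inE /= in_itv /= => /itvI.
  exact: continuous_rho.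
- split.
  + move=> y; rewrite in_itv /= => /andP[py yq].
    have /dF dy : p <= y <= q by rewrite (ltW py) (ltW yq).
    exact: ex_derive.
  + by apply: cvg_at_right_filter; apply: F_cont; rewrite lexx ltW.
  + by apply: cvg_at_left_filter; apply: F_cont; rewrite lexx ltW.
- move=> y; rewrite in_itv /= => /andP[py yq]; rewrite derive1E.
  have /dF dy : p <= y <= q by rewrite (ltW py) (ltW yq).
  exact: derive_val.
Qed.

Lemma rho_window a mu : 0 < a -> -2 < mu < 2 ->
  exists p q, [/\ -2 < p <= q, q < 2, asin (q / 2) - asin (p / 2) <= 4 * a &
    forall x, -2 < x < 2 -> `|x - mu| <= a / rho x -> p <= x <= q].
Proof.
move=> a0 /andP[mu1 mu2].
have vI : -1 < mu / 2 < 1 by apply/andP; split; lra.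
have [c cI bounded] := dist_le_sqrt1B_bounded (divr_gt0 a0 (ltr0n _ 2)) vI.
have phi_lt : asin (mu / 2) < pi / 2 by apply: asin_ltpi2; apply/andP; split; lra.
have d0 : 0 <= 2 * a by rewrite mulr_ge0 // ltW.
have [p [q [/andP[p_gt pq] q_lt len window]]] := asin_window cI phi_lt d0.
exists (2 * p), (2 * q); split.
- by apply/andP; split; lra.
- lra.
- by rewrite !(mulrC 2) !mulfK //; move: len; rewrite mulr2n; lra.
move=> x /andP[x1 x2]; rewrite /rho invrK => hx.
have uI : -1 <= x / 2 <= 1 by apply/andP; split; lra.
have su_gt0 : 0 < Num.sqrt (1 - (x / 2) ^+ 2) by apply: sqrt1B_gt0; apply/andP; split; lra.
have hu : `|x / 2 - mu / 2| <= a / 2 * Num.sqrt (1 - (x / 2) ^+ 2).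
  by rewrite -mulrBl normrM [`|2^-1|]gtr0_norm ?invr_gt0 //; lra.
have asin_close : `|asin (x / 2) - asin (mu / 2)| <= 2 * a.
  have vI' : -1 <= mu / 2 <= 1 by apply/andP; split; lra.
  rewrite -(ler_pM2l su_gt0); apply: le_trans (sqrt_mul_dist_asin_le uI vI') _; lra.
have /andP[? ?] := window _ (bounded _ uI hu) asin_close.
by apply/andP; split; lra.
Qed.

Lemma continuous_rho_scaled (F : R -> R) t mu x : continuous F -> -2 < x < 2 ->
  {for x, continuous (fun x => F (t * rho x * (x - mu)))}.
Proof.
move=> Fcont xI; apply: continuous_comp; last exact: Fcont.
apply: continuousM; first by apply: continuousM; [exact: cvg_cst | exact: continuous_rho].
by apply: continuousB; [exact: cvg_id | exact: cvg_cst].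
Qed.

Lemma rho_scaled_window (F : R -> R) K t mu :
  0 < K -> (forall z, F z != 0 -> `|z| <= K) -> 0 < t -> -2 < mu < 2 ->
  exists p q, [/\ -2 < p <= q, q < 2, asin (q / 2) - asin (p / 2) <= 4 * (K / t) &
    forall x, -2 < x < 2 -> F (t * rho x * (x - mu)) != 0 -> p <= x <= q].
Proof.
move=> K0 FK t0 muI; have [p [q [pq q_lt len window]]] := rho_window (divr_gt0 K0 t0) muI.
exists p, q; split => // x xI /FK.
rewrite !normrM (gtr0_norm t0) (gtr0_norm (rho_gt0 xI)) => bound.
apply: (window x xI); rewrite !ler_pdivlMr ?rho_gt0 //.
by move: bound; rewrite -mulrA mulrC [rho x * _]mulrC.
Qed.

Lemma integral_mul_rho_le (G : R -> R) M p q : -2 < p -> p <= q -> q < 2 ->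
  (forall x, -2 < x < 2 -> {for x, continuous G}) -> (forall x, 0 <= G x <= M) ->
  (\int[lebesgue_measure]_(x in `[p, q]) (G x * rho x)%:E <=
    (M * (2 * asin (q / 2) - 2 * asin (p / 2)))%:E)%E.
Proof.
move=> p_gt pq q_lt G_cont G_bound.
have pqI x : p <= x <= q -> -2 < x < 2 by move=> /andP[? ?]; apply/andP; split; lra.
have rho_meas : measurable_fun `[p, q] (EFin \o @rho R).
  by apply: measurable_fun_itv_continuous => x /pqI/continuous_rho.
rewrite [leRHS]EFinM -integral_rho // -ge0_integralZl_EFin //; first last.
- by have /andP[G0 GM] := G_bound p; apply: le_trans GM.
- by move=> x _; rewrite lee_fin rho_ge0.
apply: ge0_le_integral => //.
- by move=> x _; rewrite lee_fin mulr_ge0 ?rho_ge0 //; case/andP: (G_bound x).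
- apply: measurable_fun_itv_continuous => x /pqI xI.
  by apply: continuousM; [exact: G_cont | exact: continuous_rho].
- exact: measurable_funeM.
- by move=> x _; rewrite lee_fin ler_wpM2r ?rho_ge0 //; case/andP: (G_bound x).
Qed.

End rho.

Lemma compact_support_bounded (R : realType) (F : R -> R) :
  compact_support F -> exists2 K, 0 < K & forall z, F z != 0 -> `|z| <= K.
Proof.
move=> /compact_bounded[K0 [_ bounded]]; exists (`|K0| + 1) => [|z Fz].
  by rewrite ltr_pwDr.
apply: bounded; first by rewrite (le_lt_trans (ler_norm K0)) // ltrDl.
exact: subset_closure.
Qed.

Lemma radial_le_at0 (R : realType) (F : R -> R) :
  (forall x y, `|y| < `|x| -> F x <= F y) -> forall z, F z <= F 0.
Proof.
move=> Fmono z; have [->//|z0] := eqVneq z 0.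
by apply: Fmono; rewrite normr0 normr_gt0.
Qed.

Theorem lemma15 (R : realType) (F : R -> R)
  (Fcont : continuous F) (Fcs : compact_support F)
  (Fge0 : forall x, 0 <= F x)
  (Fmono : forall x y, `|y| < `|x| -> F x <= F y) :
  exists (C : R) (n0 : nat), forall n : nat, (n0 <= n)%N ->
    forall mu : R, `|mu| < 2 ->
      ((\int[@lebesgue_measure R]_(x in `](-2 : R)%R, (2 : R)%R[%classic)
          ((F (n%:R * rho x * (x - mu)) * rho x)%R)%:E) <= ((C / n%:R)%R)%:E)%E.
Proof.
have [K K0 FK] := compact_support_bounded Fcs.
exists (8 * F 0 * K), 1%N => n n_ge1 mu; rewrite ltr_norml => muI.
have n0 : 0 < n%:R :> R by rewrite ltr0n.
have [p [q [/andP[p_gt pq] q_lt len support]]] := rho_scaled_window K0 FK n0 muI.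
rewrite (@integral_vanishing_outside _ _ _ (@lebesgue_measure R) _ `[p, q]%classic).
- apply: le_trans (integral_mul_rho_le (M := F 0) p_gt pq q_lt _ _) _.
  + by move=> x xI; apply: continuous_rho_scaled.
  + by move=> x; rewrite Fge0 radial_le_at0.
  have -> : 8 * F 0 * K / n%:R = F 0 * (2 * (4 * (K / n%:R))) by ring.
  by rewrite lee_fin ler_wpM2l //; lra.
- by move=> x; rewrite /= !in_itv /= => /andP[? ?]; apply/andP; split; lra.
- move=> x; rewrite /= !in_itv /= => xI xpq.
  by apply/eqP; rewrite eqe mulf_eq0; apply/orP; left; apply/negPn/negP => /(support x xI).
Qed.
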